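(* Let $d\ge2$ and assume that for all finite families $\mathcal{G}\subseteq\binom{\mathbb{N}}{d-1}$ one has $\mathrm{Inc}(\mathcal{C}(\mathcal{G}))\subseteq\mathcal{C}(\mathrm{Inc}(\mathcal{G}))$. Then: (i) for all $k\in\mathbb{N}$ and all finite families $\mathcal{G}\subseteq\binom{\mathbb{N}_{>k}}{d-1}$ one has $\mathrm{Inc}(\mathcal{C}_{>k}(\mathcal{G}))\subseteq\mathcal{C}_{>k}(\mathrm{Inc}(\mathcal{G}))$; (ii) for all finite families $\mathcal{F}\subseteq\binom{\mathbb{N}}{d}$ one has $\mathrm{Inc}(\mathcal{C}^{(l)}(\mathcal{F}))\subseteq\mathcal{C}^{(l)}(\mathrm{Inc}(\mathcal{F}))$ and $\mathrm{Inc}(\mathcal{C}^{(r)}(\mathcal{F}))\subseteq\mathcal{C}^{(r)}(\mathrm{Inc}(\mathcal{F}))$.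
   Context: $\mathbb{N}=\{1,2,3,\dots\}$, $\mathbb{N}_{>k}=\{k+1,k+2,\dots\}$. $\binom{S}{d}$ is the set of $d$-element subsets of $S$; elements are written $\mathbf{u}=(u_1,\ldots,u_d)$ with $u_1<\cdots<u_d$, and $(k,\widehat{\mathbf{u}})$ denotes $\{k\}\cup\widehat{\mathbf{u}}$ (with $k<\min\widehat{\mathbf u}$), $(\widehat{\mathbf{u}},k)$ denotes $\widehat{\mathbf{u}}\cup\{k\}$ (with $\max\widehat{\mathbf u}<k$). Squashed order: $\mathbf{u}<\mathbf{v}$ iff the largest element of the symmetric difference of $\mathbf{u},\mathbf{v}$ belongs to $\mathbf{v}$. For finite $\mathcal{G}\subseteq\binom{\mathbb{N}}{e}$, $\mathcal{C}(\mathcal{G})$ is the set of the $|\mathcal{G}|$ smallest elements of $\binom{\mathbb{N}}{e}$; for finite $\mathcal{G}\subseteq\binom{\mathbb{N}_{>k}}{e}$, $\mathcal{C}_{>k}(\mathcal{G})$ is the set of the $|\mathcal{G}|$ smallest elements of $\binom{\mathbb{N}_{>k}}{e}$. $\mathrm{Inc}_1$ is the set of maps $\pi\colon\mathbb{N}\to\mathbb{N}$ with $\pi(j)<\pi(j+1)$ and $\pi(j)\le j+1$ for all $j$, acting by $\pi(\mathbf{u})=(\pi(u_1),\ldots,\pi(u_e))$; $\mathrm{Inc}(\mathcal{G})=\{\pi(\mathbf{u})\mid\mathbf{u}\in\mathcal{G},\pi\in\mathrm{Inc}_1\}$. For $\mathcal{F}\subseteq\binom{\mathbb{N}}{d}$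 and $k\ge1$: $\widehat{\mathcal{F}}_{1,k}=\{\widehat{\mathbf{u}}\mid (k,\widehat{\mathbf{u}})\in\mathcal{F}\}\subseteq\binom{\mathbb{N}_{>k}}{d-1}$, $\widehat{\mathcal{F}}_{d,k}=\{\widehat{\mathbf{u}}\mid(\widehat{\mathbf{u}},k)\in\mathcal{F}\}$. Left partial compression: $\mathcal{C}^{(l)}(\mathcal{F})=\bigcup_{k\ge1}\{(k,\widehat{\mathbf{u}})\mid\widehat{\mathbf{u}}\in\mathcal{C}_{>k}(\widehat{\mathcal{F}}_{1,k})\}$; right partial compression: $\mathcal{C}^{(r)}(\mathcal{F})=\bigcup_{k\ge1}\{(\widehat{\mathbf{u}},k)\mid\widehat{\mathbf{u}}\in\mathcal{C}(\widehat{\mathcal{F}}_{d,k})\}$. *)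

From mathcomp Require Import all_boot.
Set Implicit Arguments. Unset Strict Implicit. Unset Printing Implicit Defensive.

(* A finite subset of N = {1,2,3,...} is represented by the strictly
   increasing list of its elements (canonical representation, so list
   equality = set equality). *)
Definition setfam := seq nat -> Prop.

(* u is an element of binom(N_{>k}, e); binom(N, e) is the case k = 0. *)
Definition is_subset_gt (k e : nat) (u : seq nat) : bool :=
  [&& sorted ltn u, all (fun x => k < x) u & size u == e].

Definition fam_of (k e : nat) (G : setfam) : Prop :=
  forall u, G u -> is_subset_gt k e u.

Definition fam_finite (G : setfam) : Prop :=
  exists L : seq (seq nat), forall u, G u <-> u \in L.

Definition fam_sub (G H : setfam) : Prop := forall u, G u -> H u.

Definition symdiff (u v : seq nat) : seq nat :=
  [seq x <- u ++ v | (x \in u) (+) (x \in v)].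

Definition colex_lt (u v : seq nat) : bool :=
  (symdiff u v != [::]) && ((\max_(x <- symdiff u v) x) \in v).

Fixpoint ksubs (s : seq nat) (e : nat) : seq (seq nat) :=
  match e with
  | 0 => [:: [::]]
  | e'.+1 =>
    match s with
    | [::] => [::]
    | x :: s' => [seq x :: t | t <- ksubs s' e'] ++ ksubs s' e
    end
  end.

(* rank of v among the e-subsets of N_{>k} in squashed order: the number of
   e-subsets w of N_{>k} with w < v.  Any such w has max w <= max v, so it
   suffices to enumerate the e-subsets of {k+1, ..., max v}. *)
Definition colex_rank (k e : nat) (v : seq nat) : nat :=
  count (fun w => colex_lt w v) (ksubs (iota k.+1 ((\max_(x <- v) x) - k)) e).

(* C_{>k}(G) for a finite G ⊆ binom(N_{>k}, e): the |G| smallest elements of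
   binom(N_{>k}, e), i.e. those of rank < |G|.  C(G) is the case k = 0. *)
Definition Comp (k e : nat) (G : setfam) : setfam :=
  fun v => is_subset_gt k e v /\
    exists L : seq (seq nat),
      [/\ uniq L, (forall w, G w <-> w \in L) & colex_rank k e v < size L].

Definition inc1 (pi : nat -> nat) : Prop :=
  forall j, 0 < j -> [/\ 0 < pi j, pi j < pi j.+1 & pi j <= j.+1].

Definition Inc (G : setfam) : setfam :=
  fun w => exists u pi, [/\ G u, inc1 pi & w = map pi u].

Definition slice_l (F : setfam) (k : nat) : setfam := fun u => F (k :: u).
Definition slice_r (F : setfam) (k : nat) : setfam := fun u => F (rcons u k).

Definition Compl (d : nat) (F : setfam) : setfam :=
  fun w => exists k u, [/\ 0 < k, w = k :: u & Comp k d.-1 (slice_l F k) u].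

Definition Compr (d : nat) (F : setfam) : setfam :=
  fun w => exists k u, [/\ 0 < k, w = rcons u k & Comp 0 d.-1 (slice_r F k) u].

From mathcomp Require Import all_boot zify.
From Stdlib Require Import Classical.

Set Implicit Arguments.
Unset Strict Implicit.

(* (i) Translation u |-> u + t is an order isomorphism of the squashed order
   from binom(N_{>k}, e) onto binom(N_{>k+t}, e); hence C_{>k} is conjugate
   to C = C_{>0} by the shift by k.  A map pi in Inc_1 acts on sets above k
   as the shift of the map j |-> pi(k + j) - k, which is again in Inc_1, so
   the hypothesis for C transports to C_{>k}.

   (ii) A map pi in Inc_1 satisfies pi(k) \in {k, k+1}; if pi(k) = k it is
   the identity below k, if pi(k) = k+1 it is the successor above k.  For the
   left compression, (k, u) is sent either to (k, pi u) (use (i) on the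
   slice at k) or to (k+1, u+1) (use shift invariance).  For the right
   compression, (u, k) is sent either to (u, k) itself (elements of C(G) stay
   below k when G does) or to (pi u, k+1) (use the hypothesis on the slice).
   In each case the slice of Inc(F) contains the relevant image of the slice
   of F, witnessed by gluing two maps of Inc_1 together, and C is monotone. *)

Lemma finite_inj (f : seq nat -> seq nat) (P : setfam) (S : seq (seq nat)) :
  injective f -> (forall u, P u -> f u \in S) -> fam_finite P.
Proof.
move=> finj; elim: S P => [|s S IH] P HP.
  by exists [::] => u; split => // /HP.
case: (classic (exists u, P u /\ f u = s)) => [[u0 [Pu0 fu0]]|NE].
  have [L HL] : fam_finite (fun u => P u /\ u <> u0).
    apply: IH => u [Pu ne]; move: (HP u Pu); rewrite inE => /orP [/eqP e|//].
    by exfalso; apply: ne; apply: finj; rewrite e fu0.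
  exists (u0 :: L) => u; rewrite inE; split.
    move=> Pu; case: (eqVneq u u0) => [->|ne]; first by [].
    by apply/HL; split => //; apply/eqP.
  by case/orP => [/eqP->//|/HL[]].
apply: IH => u Pu; move: (HP u Pu); rewrite inE => /orP [/eqP e|//].
by exfalso; apply: NE; exists u.
Qed.

Lemma finite_preim (f : seq nat -> seq nat) (Q : setfam) :
  injective f -> fam_finite Q -> fam_finite (fun u => Q (f u)).
Proof. by move=> finj [L HL]; apply: (@finite_inj f _ L finj) => u /HL. Qed.

Lemma slice_l_finite (F : setfam) k : fam_finite F -> fam_finite (slice_l F k).
Proof. by apply: finite_preim => a b []. Qed.

Lemma slice_r_finite (F : setfam) k : fam_finite F -> fam_finite (slice_r F k).
Proof. exact: finite_preim (@rcons_injl _ k). Qed.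

Fixpoint allseqs (B n : nat) : seq (seq nat) :=
  match n with
  | 0 => [:: [::]]
  | n'.+1 => [seq x :: t | x <- iota 0 B, t <- allseqs B n']
  end.

Lemma mem_allseqs B w : all (fun x => x < B) w -> w \in allseqs B (size w).
Proof.
elim: w => [|a w IH] //= /andP [aB /IH h].
by apply: (allpairs_f (fun x t => x :: t)) => //; rewrite mem_iota.
Qed.

(* Inc(F) is finite: pi(u) has the size of u and entries at most max u + 1. *)
Lemma inc_finite k e (F : setfam) :
  fam_finite F -> fam_of k e F -> fam_finite (Inc F).
Proof.
move=> [L HL] Fof.
apply: (@finite_inj id _
  (flatten [seq allseqs (\max_(x <- u) x).+2 (size u) | u <- L])) => //.
move=> w [u [pi [Fu Hpi ->]]]; apply/flatten_mapP; exists u; first exact/HL.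
rewrite -(size_map pi u); apply: mem_allseqs; apply/allP => y /mapP [x xu ->].
have /and3P [_ /allP a _] := Fof u Fu.
have [_ _ h] := Hpi x (leq_ltn_trans (leq0n k) (a x xu)).
have := @leq_bigmax_seq _ u predT id x xu isT; rewrite /=; lia.
Qed.

Lemma comp_mono k e (G G' : setfam) v : Comp k e G v -> fam_finite G' ->
  fam_sub G G' -> Comp k e G' v.
Proof.
move=> [Hv [L [uL HL Hr]]] [L' HL'] Hsub; split => //.
exists (undup L'); split; [exact: undup_uniq| by move=> w; rewrite mem_undup|].
apply: (leq_trans Hr); apply: uniq_leq_size => // w /HL /Hsub /HL'.
by rewrite mem_undup.
Qed.

Lemma comp_ext k e (G G' : setfam) v : (forall u, G u <-> G' u) ->
  Comp k e G v -> Comp k e G' v.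
Proof.
move=> E [Hv [L [uL HL Hr]]]; split => //; exists L; split => // w.
by rewrite -HL E.
Qed.

Definition shiftF (t : nat) (G : setfam) : setfam :=
  fun x => exists y, x = map (addn t) y /\ G y.

Lemma max_shift t s : s != [::] ->
  \max_(x <- map (addn t) s) x = t + \max_(x <- s) x.
Proof.
elim: s => [|a s IH] // _.
rewrite /= !big_cons; case: s IH => [|b s] IH.
  by rewrite !big_nil !maxn0.
by rewrite IH // addn_maxr.
Qed.

Lemma symdiff_map t u v :
  symdiff (map (addn t) u) (map (addn t) v) = map (addn t) (symdiff u v).
Proof.
rewrite /symdiff -map_cat filter_map; congr map; apply: eq_filter => x /=.
by rewrite !mem_map //; exact: addnI.
Qed.

Lemma colex_shift t w v :
  colex_lt (map (addn t) w) (map (addn t) v) = colex_lt w v.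
Proof.
rewrite /colex_lt symdiff_map; case E: (symdiff w v) => [|a s] //.
by rewrite max_shift // mem_map //; exact: addnI.
Qed.

Lemma ksubs_map (f : nat -> nat) s e :
  ksubs (map f s) e = map (map f) (ksubs s e).
Proof.
elim: s e => [|x s IH] [|e] //=.
by rewrite map_cat IH IH -!map_comp.
Qed.

Lemma rank_shift k t e v :
  colex_rank (k + t) e (map (addn t) v) = colex_rank k e v.
Proof.
rewrite /colex_rank.
have -> : \max_(x <- map (addn t) v) x - (k + t) = \max_(x <- v) x - k.
  case: v => [|a v]; first by rewrite !big_nil.
  by rewrite max_shift // [t + _]addnC subnDr.
have -> : (k + t).+1 = t + k.+1 by lia.
rewrite iotaDl ksubs_map count_map; apply: eq_count => w /=.
exact: colex_shift.
Qed.

Lemma subset_shift k t e v :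
  is_subset_gt (k + t) e (map (addn t) v) = is_subset_gt k e v.
Proof.
rewrite /is_subset_gt sorted_map all_map size_map.
rewrite (@eq_sorted _ _ ltn); last by move=> x y /=; rewrite ltn_add2l.
by rewrite (@eq_all _ _ (fun x => k < x)) // => x /=; apply/idP/idP; lia.
Qed.

Lemma subK_map t w : map (subn^~ t) (map (addn t) w) = w.
Proof. by elim: w => //= a w ->; congr cons; lia. Qed.

Lemma addK_map k x : all (fun y => k < y) x ->
  map (addn k) (map (subn^~ k) x) = x.
Proof. by elim: x => //= a x IH /andP [ha /IH ->]; congr cons; lia. Qed.

Lemma comp_shift k t e G v :
  Comp (k + t) e (shiftF t G) (map (addn t) v) <-> Comp k e G v.
Proof.
split=> [[Hv [L [uL HL Hr]]]|[Hv [L [uL HL Hr]]]]; split.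
- by rewrite -(subset_shift _ t).
- have HL2 : forall w, w \in L -> w = map (addn t) (map (subn^~ t) w).
    by move=> w /HL [y [-> _]]; rewrite subK_map.
  exists (map (map (subn^~ t)) L); split.
  + rewrite map_inj_in_uniq // => a b aL bL E.
    by rewrite (HL2 a aL) (HL2 b bL) E.
  + move=> w; split.
      move=> Gw; apply/mapP; exists (map (addn t) w); last by rewrite subK_map.
      by apply/HL; exists w.
    move/mapP => [y yL ->]; have [z [yz Gz]] := proj2 (HL y) yL.
    by rewrite yz subK_map.
  + by rewrite size_map -(rank_shift k t).
- by rewrite subset_shift.
- exists (map (map (addn t)) L); split.
  + by rewrite (map_inj_uniq (inj_map (@addnI t))).
  + move=> w; split.
      by move=> [y [-> Gy]]; apply: map_f; apply/HL.
    by move/mapP => [y yL ->]; exists y; split => //; apply/HL.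
  + by rewrite rank_shift size_map.
Qed.

Lemma shiftF_unshift k e (G : setfam) : fam_of k e G ->
  forall x, G x <-> shiftF k (fun y => G (map (addn k) y)) x.
Proof.
move=> Gof x; split; last by move=> [y [-> Gy]].
move=> Gx; have /and3P [_ xk _] := Gof x Gx.
by exists (map (subn^~ k) x); rewrite addK_map.
Qed.

Lemma ksubs_all s e w : w \in ksubs s e -> all (fun x => x \in s) w.
Proof.
elim: s e w => [|a s IH] [|e] w //=; rewrite ?inE.
- by move/eqP ->.
- by move/eqP ->.
rewrite mem_cat => /orP [/mapP [t /IH ht ->]|/IH ht] /=.
  rewrite inE eqxx /=; apply: sub_all ht => x xs; by rewrite inE xs orbT.
by apply: sub_all ht => x xs; rewrite inE xs orbT.
Qed.

Lemma ksubs_mem a n w : sorted ltn w -> all (fun x => a <= x < a + n) w ->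
  w \in ksubs (iota a n) (size w).
Proof.
elim: n a w => [|n IH] a w.
  by case: w => //= x w _ /andP [h _]; lia.
case: w => [|y w] //= sw /andP [hy hw].
rewrite mem_cat; move: sw; rewrite (path_sortedE ltn_trans) => /andP [yw sw].
case: (eqVneq y a) => [ya|ya].
  apply/orP; left; rewrite ya; apply: map_f; apply: IH => //; apply/allP => x xw.
  by have := allP yw x xw; have := allP hw x xw; rewrite ya; lia.
apply/orP; right; have -> : (size w).+1 = size (y :: w) by [].
apply: IH; first by rewrite /= (path_sortedE ltn_trans) yw sw.
rewrite /= (_ : a.+1 <= y < a.+1 + n); last by move: hy ya => /= ?; move/eqP; lia.
by apply/allP => x xw; have := allP yw x xw; have := allP hw x xw; lia.
Qed.

Lemma max_mem s : s != [::] -> \max_(x <- s) x \in s.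
Proof.
elim: s => [|a s IH] // _; rewrite big_cons inE.
case: s IH => [|b s] IH; first by rewrite big_nil maxn0 eqxx.
case: (leqP a (\max_(x <- b :: s) x)) => h; first by rewrite IH // orbT.
by rewrite eqxx.
Qed.

Lemma colex_lt_big w u m : m \in u -> all (fun x => x < m) w -> colex_lt w u.
Proof.
move=> mu wm; rewrite /colex_lt.
have mw : m \notin w by apply/negP => /(allP wm); rewrite ltnn.
have msd : m \in symdiff w u by rewrite /symdiff mem_filter mem_cat (negbTE mw) mu.
have ne : symdiff w u != [::] by case: (symdiff w u) msd.
rewrite ne /=.
have Mm := @leq_bigmax_seq _ (symdiff w u) predT id m msd isT.
have := max_mem ne; rewrite /symdiff mem_filter => /andP [].
set M := \max_(x <- _) x; move=> /= hx _.
case Mw: (M \in w) hx => //= _.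
by have := allP wm M Mw; move: Mm; rewrite /= -/M; lia.
Qed.

Lemma count_ksubs_cat (P : pred (seq nat)) s s' e :
  count P (ksubs s e) <= count P (ksubs (s ++ s') e).
Proof.
elim: s P e => [|a s IH] P [|e] //=; first by case: s'.
by rewrite !count_cat !count_map; apply: leq_add; exact: IH.
Qed.

(* If all members of G are e-subsets of {1, ..., k-1}, so are those of C(G):
   a set reaching k has rank at least binom(k-1, e) >= |G|. *)
Lemma comp_bound e (G : setfam) u k : Comp 0 e G u ->
  (forall w, G w -> is_subset_gt 0 e w /\ all (fun x => x < k) w) ->
  all (fun x => x < k) u.
Proof.
move=> [Hu [L [uL HL Hr]]] HG; apply/allP => m mu; rewrite ltnNge; apply/negP => km.
have sz : size L <= size (ksubs (iota 1 k.-1) e).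
  apply: uniq_leq_size => // w /HL /HG [/and3P [sw w0 /eqP <-] wk].
  apply: ksubs_mem => //; apply/allP => x xw.
  by have := allP w0 x xw; have := allP wk x xw; lia.
have rk : size (ksubs (iota 1 k.-1) e) <= colex_rank 0 e u.
  rewrite /colex_rank subn0.
  have Mm := @leq_bigmax_seq _ u predT id m mu isT.
  have -> : \max_(x <- u) x = k.-1 + (\max_(x <- u) x - k.-1) by move: Mm => /=; lia.
  rewrite iotaD; apply: leq_trans (count_ksubs_cat _ _ _ _).
  have below : all (fun w => colex_lt w u) (ksubs (iota 1 k.-1) e).
    apply/allP => w /ksubs_all hw.
    apply: (colex_lt_big mu); apply/allP => x /(allP hw); rewrite mem_iota; lia.
  by rewrite all_count in below; rewrite (eqP below).
by have := leq_trans Hr (leq_trans sz rk); rewrite ltnn.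
Qed.

Lemma inc1_idmap : inc1 id.
Proof. by move=> j j0; split. Qed.

Lemma inc1_ge pi : inc1 pi -> forall j, 0 < j -> j <= pi j.
Proof.
move=> Hpi; elim => // j IH _; case: j IH => [|j] IH.
  by have [h _ _] := Hpi 1 isT.
by have [_ h _] := Hpi j.+1 isT; exact: leq_ltn_trans (IH isT) h.
Qed.

Lemma inc1_up pi j m : inc1 pi -> 0 < j -> j.+1 <= pi j -> j <= m ->
  pi m = m.+1.
Proof.
move=> Hpi j0 hj /subnKC <-; elim: (m - j) => [|n IH].
  have [_ _ h] := Hpi j j0; rewrite addn0; apply/eqP; rewrite eqn_leq h hj //.
have [_ h1 h2] := Hpi (j + n) (leq_trans j0 (leq_addr _ _)).
rewrite addnS; apply/eqP; rewrite eqn_leq.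
have [_ _ h3] := Hpi (j + n).+1 isT.
by rewrite h3 /=; rewrite IH in h1.
Qed.

Lemma inc1_dichotomy pi k : inc1 pi -> 0 < k -> pi k = k \/ pi k = k.+1.
Proof. by move=> Hpi k0; have := inc1_ge Hpi k0; have [_ _] := Hpi k k0; lia. Qed.

Lemma map_inc1_below pi k u : inc1 pi -> pi k = k ->
  all (fun x => 0 < x <= k) u -> map pi u = u.
Proof.
move=> Hpi pk uk; rewrite -{2}(map_id u); apply/eq_in_map => j /(allP uk) /andP [j0 jk].
have := inc1_ge Hpi j0; rewrite leq_eqVlt => /orP [/eqP //|lt].
by have := inc1_up Hpi j0 lt jk; rewrite pk => /n_Sn.
Qed.

Lemma map_inc1_above pi k u : inc1 pi -> 0 < k -> pi k = k.+1 ->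
  all (fun x => k <= x) u -> map pi u = map (addn 1) u.
Proof.
move=> Hpi k0 pk uk; apply/eq_in_map => y /(allP uk) ky /=.
by rewrite add1n; apply: (inc1_up Hpi k0) => //; rewrite pk.
Qed.

Definition inc1_tail (k : nat) (pi : nat -> nat) (j : nat) : nat := pi (k + j) - k.

Lemma inc1_tailP pi k : inc1 pi -> inc1 (inc1_tail k pi).
Proof.
move=> Hpi j j0; rewrite /inc1_tail.
have kj0 : 0 < k + j by lia.
have [a b c] := Hpi (k + j) kj0; have := inc1_ge Hpi kj0.
by rewrite addnS; split; lia.
Qed.

Lemma map_inc1_tail pi k u : inc1 pi -> 0 < k -> all (fun x => k < x) u ->
  map pi u = map (addn k) (map (inc1_tail k pi) (map (subn^~ k) u)).
Proof.
move=> Hpi k0 uk; rewrite -{1}(addK_map uk) -!map_comp; apply: eq_map => x /=.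
by have := inc1_ge Hpi (leq_trans k0 (leq_addr (x - k) k)); rewrite /inc1_tail; lia.
Qed.

Definition glue (k : nat) (pi1 pi2 : nat -> nat) (j : nat) : nat :=
  if j < k then pi1 j else pi2 j.

Lemma inc1_glue k pi1 pi2 : inc1 pi1 ->
  (forall j, 0 < j -> k <= j -> [/\ 0 < pi2 j, pi2 j < pi2 j.+1 & pi2 j <= j.+1]) ->
  (1 < k -> pi1 k.-1 < pi2 k) -> inc1 (glue k pi1 pi2).
Proof.
move=> h1 h2 hb j j0; rewrite /glue /=.
case: (ltngtP j.+1 k) => hk.
- exact: h1.
- by apply: h2; rewrite // -ltnS.
- have [a _ c] := h1 j j0.
  by move: hb; rewrite -hk => /(_ j0) hb; split.
Qed.

Lemma inc_refl (F : setfam) : fam_sub F (Inc F).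
Proof. by move=> u Fu; exists u, id; rewrite map_id; split => //; exact: inc1_idmap. Qed.

Lemma inc_mono (F F' : setfam) : fam_sub F F' -> fam_sub (Inc F) (Inc F').
Proof. by move=> sub _ [u [pi [/sub Fu Hpi ->]]]; exists u, pi. Qed.

(* Translating Inc(G) by k is covered by Inc of the translate: a map
   p of Inc_1 becomes the identity up to k followed by j |-> k + p(j - k). *)
Lemma shift_inc_sub k e (G : setfam) : fam_of 0 e G ->
  fam_sub (shiftF k (Inc G)) (Inc (shiftF k G)).
Proof.
move=> Gof _ [_ [-> [g [p [Gg Hp ->]]]]].
have /and3P [_ g0 _] := Gof g Gg.
exists (map (addn k) g), (glue k.+1 id (fun j => k + p (j - k))); split.
- by exists g.
- apply: inc1_glue => [|j j0 kj|_]; first exact: inc1_idmap.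
    have jk0 : 0 < j - k by lia.
    have [a b c] := Hp (j - k) jk0.
    by rewrite (_ : j.+1 - k = (j - k).+1); [split; lia | lia].
  by rewrite /= subSnn; have [a _ _] := Hp 1 isT; lia.
- rewrite -!map_comp; apply/eq_in_map => z /(allP g0) z0.
  by rewrite /= /glue (_ : k + z < k.+1 = false) ?addKn //; lia.
Qed.

Section Slices.
Variable F : setfam.
Variable k : nat.

(* Extending a map of Inc_1 by the identity up to k sends k :: g to k :: p g. *)
Lemma inc_slice_l : (forall g, slice_l F k g -> all (fun y => k < y) g) ->
  fam_sub (Inc (slice_l F k)) (slice_l (Inc F) k).
Proof.
move=> Fk _ [g [p [Fg Hp ->]]].
exists (k :: g), (glue k.+1 id p); split => //.
- apply: inc1_glue => [|j j0 _|_]; [exact: inc1_idmap | exact: Hp |].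
  exact: inc1_ge Hp _ (ltn0Sn k).
- rewrite /= /glue ltnSn; congr cons; apply/eq_in_map => y /(allP (Fk g Fg)) ky.
  by rewrite ltnNge ky.
Qed.

(* The map fixing {1, ..., k-1} and shifting the rest by one sends
   k :: y to (k+1) :: (y + 1). *)
Lemma shift_slice_l : 0 < k -> (forall g, slice_l F k g -> all (fun y => k < y) g) ->
  fam_sub (shiftF 1 (slice_l F k)) (slice_l (Inc F) k.+1).
Proof.
move=> k0 Fk _ [y [-> Fy]].
exists (k :: y), (glue k id succn); split => //.
- apply: inc1_glue => [|j j0 _|_]; [exact: inc1_idmap | by split | ].
  by rewrite /=; lia.
- rewrite /= /glue ltnn; congr cons; apply/eq_in_map => z /(allP (Fk y Fy)) kz.
  by rewrite ltnNge ltnW.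
Qed.

(* Extending a map of Inc_1 by the successor from k on sends rcons g k to
   rcons (p g) (k+1). *)
Lemma inc_slice_r : (forall g, slice_r F k g -> all (fun y => y < k) g) ->
  fam_sub (Inc (slice_r F k)) (slice_r (Inc F) k.+1).
Proof.
move=> Fk _ [g [p [Fg Hp ->]]].
exists (rcons g k), (glue k p succn); split => //.
- apply: inc1_glue => [|j|k0] //.
  have k1 : 0 < k.-1 by lia.
  by have [_ _ c] := Hp k.-1 k1; rewrite (ltn_predK k0) in c.
- rewrite map_rcons /= /glue ltnn; congr rcons; apply/eq_in_map => y yg.
  by rewrite (allP (Fk g Fg) y yg).
Qed.

End Slices.

Lemma cons_props d k w : is_subset_gt 0 d (k :: w) -> is_subset_gt k d.-1 w.
Proof.
rewrite /is_subset_gt /= (path_sortedE ltn_trans).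
by move=> /and3P [/andP [kw sw] /andP [_ _] /eqP <-]; rewrite kw sw /=.
Qed.

Lemma sorted_rcons_ltn w k : sorted ltn (rcons w k) ->
  sorted ltn w && all (fun x => x < k) w.
Proof.
elim: w => [|a w IH] //=; rewrite !(path_sortedE ltn_trans) all_rcons.
by move=> /andP [/andP [ak aw] /IH /andP [sw wk]]; rewrite ak aw sw wk.
Qed.

Lemma rcons_props d k w : is_subset_gt 0 d (rcons w k) ->
  is_subset_gt 0 d.-1 w /\ all (fun x => x < k) w.
Proof.
rewrite /is_subset_gt all_rcons size_rcons.
move=> /and3P [/sorted_rcons_ltn /andP [sw wk] /andP [_ w0] /eqP <-].
by rewrite sw w0 wk; split => //=; rewrite eqxx.
Qed.

Section Compressions.
Variable d : nat.

Hypothesis inc_comp0 : forall G : setfam, fam_finite G -> fam_of 0 d.-1 G ->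
  fam_sub (Inc (Comp 0 d.-1 G)) (Comp 0 d.-1 (Inc G)).

(* Part (i): the same holds for C_{>k}, by conjugating with the shift by k. *)
Lemma inc_comp_gt k (G : setfam) : 0 < k -> fam_finite G -> fam_of k d.-1 G ->
  fam_sub (Inc (Comp k d.-1 G)) (Comp k d.-1 (Inc G)).
Proof.
move=> k0 Gfin Gof _ [u [pi [Cu Hpi ->]]].
pose G' : setfam := fun y => G (map (addn k) y).
have G'fin : fam_finite G' := finite_preim (inj_map (@addnI k)) Gfin.
have G'of : fam_of 0 d.-1 G' by move=> y /Gof; rewrite -(subset_shift 0 k).
have uk : all (fun y => k < y) u by case: Cu => /and3P [].
have Cu' : Comp 0 d.-1 G' (map (subn^~ k) u).
  apply/(comp_shift 0 k); rewrite add0n addK_map //.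
  exact: comp_ext (shiftF_unshift Gof) Cu.
have /(comp_shift 0 k) : Comp 0 d.-1 (Inc G')
    (map (inc1_tail k pi) (map (subn^~ k) u)).
  by apply: inc_comp0 => //; exists (map (subn^~ k) u), (inc1_tail k pi);
    split => //; exact: inc1_tailP.
rewrite add0n -map_inc1_tail // => C.
apply: (comp_mono C (inc_finite Gfin Gof)) => x /(shift_inc_sub G'of).
by apply: inc_mono => _ [y [-> Gy]].
Qed.

(* Part (ii), left compression: pi sends (k, u) to (k, pi u), which lies in
   C_{>k} of the slice by part (i), or to (k+1, u+1), the translate of u. *)
Lemma inc_compl (F : setfam) : fam_finite F -> fam_of 0 d F ->
  fam_sub (Inc (Compl d F)) (Compl d (Inc F)).
Proof.
move=> Ffin Fof _ [_ [pi [[k [u [k0 -> Cu]]] Hpi ->]]].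
have Slof : fam_of k d.-1 (slice_l F k) by move=> y /Fof /cons_props.
have Slk : forall g, slice_l F k g -> all (fun y => k < y) g.
  by move=> g /Slof /and3P [].
have IFfin := inc_finite Ffin Fof.
case: (inc1_dichotomy Hpi k0) => pk; rewrite /= pk.
- exists k, (map pi u); split => //.
  apply: (comp_mono _ (slice_l_finite k IFfin) (inc_slice_l Slk)).
  by apply: inc_comp_gt => //; [exact: slice_l_finite | exists u, pi].
- have uk : all (fun y => k <= y) u.
    by case: Cu => /and3P [_ uk _] _; apply: sub_all uk => y /ltnW.
  exists k.+1, (map (addn 1) u); rewrite (map_inc1_above Hpi k0 pk uk).
  split => //; have := proj2 (comp_shift k 1 _ _ _) Cu; rewrite addn1 => C.
  exact: comp_mono C (slice_l_finite _ IFfin) (shift_slice_l k0 Slk).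
Qed.

(* Part (ii), right compression: pi sends (u, k) to (u, k) itself, since u
   lies below k, or to (pi u, k+1), handled by the hypothesis on C. *)
Lemma inc_compr (F : setfam) : fam_finite F -> fam_of 0 d F ->
  fam_sub (Inc (Compr d F)) (Compr d (Inc F)).
Proof.
move=> Ffin Fof _ [_ [pi [[k [u [k0 -> Cu]]] Hpi ->]]]; rewrite map_rcons.
have Srk : forall g, slice_r F k g -> is_subset_gt 0 d.-1 g /\ all (fun x => x < k) g.
  by move=> g /Fof /rcons_props.
have IFfin := inc_finite Ffin Fof.
case: (inc1_dichotomy Hpi k0) => pk; rewrite pk.
- have uk : all (fun x => 0 < x <= k) u.
    case: Cu (comp_bound Cu Srk) => /and3P [_ u0 _] _ ubelow.
    by apply/allP => x xu; rewrite (allP u0 x xu) ltnW // (allP ubelow x xu).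
  exists k, u; rewrite (map_inc1_below Hpi pk uk); split => //.
  exact: comp_mono Cu (slice_r_finite k IFfin) (fun v => @inc_refl F (rcons v k)).
- exists k.+1, (map pi u); split => //.
  apply: (comp_mono _ (slice_r_finite _ IFfin) (inc_slice_r (fun g Fg => proj2 (Srk g Fg)))).
  apply: inc_comp0 => [|g /Srk []//|]; first exact: slice_r_finite.
  by exists u, pi.
Qed.

End Compressions.

Theorem lemma3p12 (d : nat) (hd : 2 <= d)
  (H : forall G : setfam, fam_finite G -> fam_of 0 d.-1 G ->
         fam_sub (Inc (Comp 0 d.-1 G)) (Comp 0 d.-1 (Inc G))) :
  (forall (k : nat) (G : setfam), 0 < k -> fam_finite G -> fam_of k d.-1 G ->
     fam_sub (Inc (Comp k d.-1 G)) (Comp k d.-1 (Inc G)))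
  /\
  (forall F : setfam, fam_finite F -> fam_of 0 d F ->
     fam_sub (Inc (Compl d F)) (Compl d (Inc F)) /\
     fam_sub (Inc (Compr d F)) (Compr d (Inc F))).
Proof.
split=> [k G|F Ffin Fof]; first exact: inc_comp_gt.
by split; [exact: inc_compl | exact: inc_compr].
Qed.
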